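(* Let $n\in\mathbb N$, let $K_1,\dots,K_n$ be singular kernel functions and let $J$ be an arbitrary $n$-field function. Let $j\in\{0,1,\dots,n\}$. For every $q>0$ and every $\mathbf y\in\overline S$ with $m_j(\mathbf y)\ne-\infty$ there exist $\eta>0$ and a set $Z\subseteq I_j(\mathbf y)$ such that for every $\mathbf x\in\overline S$ with $\|\mathbf x-\mathbf y\|\le\eta$: (i) $Z\subseteq I_j(\mathbf x)$, and every point of $Z$ has distance at least $\eta$ from $\{x_1,\dots,x_n\}$; (ii) $m_j(\mathbf x)=\sup_{t\in Z}F(\mathbf x,t)$; (iii) $F(\mathbf x,t)\ge m_j(\mathbf x)-q>-\infty$ for every $t\in Z$.
   Context: A kernel function is a function $K:(-1,0)\cup(0,1)\to\mathbb R$ that is concave on $(-1,0)$ and concave on $(0,1)$ and satisfies $\lim_{t\downarrow0}K(t)=\lim_{t\uparrow0}K(t)$. It is extended to $[-1,1]$ with values in $[-\infty,\infty)$ by its one-sided limits at $-1,0,1$. A kernel function is singular if $K(0)=-\infty$. An $n$-field function is a function $J:[0,1]\to[-\infty,\infty)$ that is bounded above and whose set of finite values has total weight strictly greater than $n$. Here the points $0$ and $1$ each have weight $1/2$ and every point of $(0,1)$ has weight $1$. $\overline S=\{\mathbf y\in\mathbb R^n:0\le y_1\le\dots\le y_n\le1\}$. $F(\mathbf y,t)=J(t)+\sum_{i=1}^nK_i(t-y_i)$, with the convention $a+(-\infty)=-\infty$. Set $y_0:=0$ and $y_{n+1}:=1$. For $j=0,\dots,n$ let $I_j(\mathbf y)=[y_j,y_{j+1}]$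 and $m_j(\mathbf y)=\sup_{t\in I_j(\mathbf y)}F(\mathbf y,t)$. $\|\mathbf v\|=\max_i|v_i|$. *)

From HB Require Import structures.
From mathcomp Require Import all_boot all_order all_algebra.
From mathcomp Require Import all_classical all_reals.
From mathcomp Require Import ereal topology normedtype.
Set Implicit Arguments. Unset Strict Implicit. Unset Printing Implicit Defensive.
Import Order.TTheory GRing.Theory Num.Theory.
Import numFieldNormedType.Exports.
Local Open Scope classical_set_scope.
Local Open Scope ring_scope.

Section Defs.
Variable R : realType.

Definition concave_on (f : R -> \bar R) (a b : R) : Prop :=
  forall x y l : R, a < x < b -> a < y < b -> 0 <= l <= 1 ->
    (l%:E * f x + (1 - l)%R%:E * f y <= f (l * x + (1 - l) * y)%R)%E.

(* K is (the extension to [-1,1] by one-sided limits of) a kernel function: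
   finite and concave on (-1,0) and on (0,1), and the values at -1, 0, 1 are
   the one-sided limits (the two one-sided limits at 0 coincide). *)
Definition kernel_function (K : R -> \bar R) : Prop :=
  (forall t : R, (-1 < t < 0) \/ (0 < t < 1) -> K t \is a fin_num) /\
  concave_on K (-1) 0 /\ concave_on K 0 1 /\
  K x @[x --> 0^'+] --> K 0 /\ K x @[x --> 0^'-] --> K 0 /\
  K x @[x --> (-1)^'+] --> K (-1) /\ K x @[x --> 1^'-] --> K 1.

Definition singular_kernel (K : R -> \bar R) : Prop :=
  kernel_function K /\ K 0 = -oo%E.

Definition pt_weight (t : R) : R := if (t == 0) || (t == 1) then 2^-1 else 1.

(* J : [0,1] -> [-oo,oo) bounded above, whose set of finite values has total
   weight > n; the total weight of a (possibly infinite) set is the supremum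
   of the weights of its finite subsets. *)
Definition field_function (n : nat) (J : R -> \bar R) : Prop :=
  (exists M : R, forall t : R, 0 <= t <= 1 -> (J t <= M%:E)%E) /\
  exists s : seq R,
    [/\ uniq s,
        all (fun t => (0 <= t <= 1) && (J t \is a fin_num)) s &
        n%:R < \sum_(t <- s) pt_weight t].

Definition Sbar (n : nat) (y : 'I_n -> R) : Prop :=
  (forall i : 'I_n, 0 <= y i <= 1) /\
  (forall i j : 'I_n, (i <= j)%N -> y i <= y j).

(* coordinate y_k with the conventions y_0 = 0, y_{n+1} = 1
   (y_k, 1 <= k <= n, is y (k-1) in 0-based indexing) *)
Definition ycoord (n : nat) (y : 'I_n -> R) (k : nat) : R :=
  match k with
  | 0 => 0
  | k'.+1 => oapp y 1 (insub k' : option 'I_n)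
  end.

Definition Iint (n : nat) (y : 'I_n -> R) (j : nat) : set R :=
  [set t | ycoord y j <= t <= ycoord y j.+1].

Definition Ffun (n : nat) (J : R -> \bar R) (K : 'I_n -> R -> \bar R)
    (y : 'I_n -> R) (t : R) : \bar R :=
  (J t + \sum_(i < n) K i (t - y i)%R)%E.

Definition mval (n : nat) (J : R -> \bar R) (K : 'I_n -> R -> \bar R)
    (y : 'I_n -> R) (j : nat) : \bar R :=
  ereal_sup (Ffun J K y @` Iint y j).

End Defs.

From HB Require Import structures.
From mathcomp Require Import all_boot all_order all_algebra.
From mathcomp Require Import all_classical all_reals.
From mathcomp Require Import ereal topology normedtype.
From mathcomp Require Import ring lra.
Import Order.TTheory GRing.Theory Num.Theory.
Import numFieldNormedType.Exports.
Import Num.Def.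
Local Open Scope classical_set_scope.
Local Open Scope ring_scope.

Set Implicit Arguments. Unset Strict Implicit.

(* A singular kernel is concave on each side of 0 and tends to -oo at 0, so on
   [-1,1] it is uniformly continuous "above every level C": nearby points have
   values that are either both below C + eps or eps-close ([level_close]).
   Let Z be the set of points of I_j(y) where F(y,.) >= m_j(y) - q/2. On Z every
   kernel term K_i(t - y_i) stays above a level C_i below which F would drop far
   under m_j(y); hence Z keeps away from every y_i, so for x close to y it keeps
   away from every x_i, lies in I_j(x), and F(x,.) and F(y,.) differ there by at
   most q/8. A point of I_j(x) outside Z is either close to some x_i with
   K_i(t - x_i) below its level, or satisfies F(y,t) < m_j(y) - q/2; in both
   cases F(x,t) is beaten by a near-maximiser of F(y,.) in Z, so the supremum
   m_j(x) is attained on Z, within q at every point of Z. *)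

Section ConcaveReal.
Variables (R : realType) (g : R -> R) (a b : R).
Hypothesis g_concave : forall x y l, a < x < b -> a < y < b -> 0 <= l <= 1 ->
  l * g x + (1 - l) * g y <= g (l * x + (1 - l) * y).

Definition slope (f : R -> R) (u v : R) := (f v - f u) / (v - u).

Lemma slopeK (f : R -> R) u v : u < v -> slope f u v * (v - u) = f v - f u.
Proof. by move=> uv; rewrite /slope mulfVK // subr_eq0 gt_eqF. Qed.

Lemma concave_slope_le p q r : a < p -> p < q -> q < r -> r < b ->
  slope g q r <= slope g p q.
Proof.
move=> ap pq qr rb; pose l := (r - q) / (r - p).
have l01 : 0 <= l <= 1.
  by apply/andP; split; rewrite /l ?divr_ge0 ?ler_pdivrMr //; lra.
have := g_concave (x := p) (y := r) ltac:(apply/andP; lra) ltac:(apply/andP; lra) l01.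
have -> : l * p + (1 - l) * r = q by rewrite /l; field; lra.
have -> : l * g p + (1 - l) * g r = ((r - q) * g p + (q - p) * g r) / (r - p).
  by rewrite /l; field; lra.
rewrite ler_pdivrMr; last lra.
move=> chord.
have e1 := slopeK g qr; have e2 := slopeK g pq.
have : (slope g q r - slope g p q) * ((r - q) * (q - p)) <= 0 by nra.
by rewrite pmulr_lle0 ?subr_le0 //; nra.
Qed.

Lemma concave_slope_le_far p q r s : a < p -> p < q -> q <= r -> r < s -> s < b ->
  slope g r s <= slope g p q.
Proof.
move=> ap pq qr rs sb; have [eqr|ltqr] := eqVneq q r.
  by rewrite -eqr in rs *; apply: concave_slope_le.
have {}ltqr : q < r by rewrite lt_neqAle ltqr.
have aq : a < q by lra.
have rb : r < b by lra.
exact: le_trans (concave_slope_le aq ltqr rs sb) (concave_slope_le ap pq ltqr rb).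
Qed.

Lemma concave_ub : a < b -> exists D, forall x, a < x < b -> g x <= D.
Proof.
move=> ab; pose c := (a + b) / 2; pose a' := (a + c) / 2; pose b' := (c + b) / 2.
have [ac cb] : a < c /\ c < b by rewrite /c; split; lra.
pose L : R := `|slope g a' c| + `|slope g c b'|.
have [S1L S2L] : `|slope g a' c| <= L /\ `|slope g c b'| <= L.
  by rewrite /L lerDl lerDr !normr_ge0.
have tangent_le S d : `|S| <= L -> `|d| <= b - a -> S * d <= L * (b - a).
  move=> SL db; apply: le_trans (ler_norm _) _.
  by rewrite normrM ler_pM ?normr_ge0.
exists (g c + L * (b - a)) => x /andP[ax xb].
have dx : `|x - c| <= b - a by rewrite ler_norml; apply/andP; split; lra.
have up1 := tangent_le _ _ S1L dx; have up2 := tangent_le _ _ S2L dx.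
have [xc|cx|->] := ltgtP x c.
- have := concave_slope_le_far (p := x) (q := c) (r := c) (s := b') ax xc (lexx c)
    ltac:(rewrite /b'; lra) ltac:(rewrite /b'; lra).
  have cx0 : 0 < c - x by lra.
  rewrite -(ler_pM2r cx0) (slopeK g xc); lra.
- have := concave_slope_le_far (p := a') (q := c) (r := c) (s := x)
    ltac:(rewrite /a'; lra) ltac:(rewrite /a'; lra) (lexx c) cx xb.
  have xc0 : 0 < x - c by lra.
  rewrite -(ler_pM2r xc0) (slopeK g cx); lra.
- rewrite lerDl mulr_ge0 //; last lra.
  exact: le_trans (normr_ge0 _) S1L.
Qed.

Lemma concave_lipschitz c d : a < c -> d < b -> exists2 L, 0 <= L &
  forall u v, c <= u <= d -> c <= v <= d -> `|g u - g v| <= L * `|u - v|.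
Proof.
move=> ac db; pose a' := (a + c) / 2; pose b' := (d + b) / 2.
pose L : R := `|slope g a' c| + `|slope g d b'|.
exists L; first by rewrite addr_ge0.
suff lip_lt u v : c <= u -> u < v -> v <= d -> `|g v - g u| <= L * (v - u).
  move=> u v /andP[cu ud] /andP[cv vd]; have [uv|vu|->] := ltgtP u v.
  - by rewrite distrC (distrC u) [`|v - u|]gtr0_norm ?subr_gt0 //; apply: lip_lt.
  - by rewrite [`|u - v|]gtr0_norm ?subr_gt0 //; apply: lip_lt.
  - by rewrite !subrr normr0 mulr0.
move=> cu uv vd; rewrite -(slopeK g uv) normrM [`|v - u|]gtr0_norm ?subr_gt0 //.
rewrite ler_pM2r ?subr_gt0 //.
have up := concave_slope_le_far (p := a') (q := c) (r := u) (s := v)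
  ltac:(rewrite /a'; lra) ltac:(rewrite /a'; lra) cu uv ltac:(lra).
have lo := concave_slope_le_far (p := u) (q := v) (r := d) (s := b')
  ltac:(lra) uv vd ltac:(rewrite /b'; lra) ltac:(rewrite /b'; lra).
have h1 := ler_norm (slope g a' c); have h2 := ler_norm (- slope g d b').
have h3 := normr_ge0 (slope g a' c); have h4 := normr_ge0 (slope g d b').
rewrite normrN in h2; rewrite /L ler_norml; apply/andP; split; lra.
Qed.

End ConcaveReal.

Section LevelClose.
Variable R : realType.

Definition level_close (C eps : R) (u v : \bar R) : Prop :=
  (u < C%:E -> v <= (C + eps)%:E)%E /\
  (C%:E <= u -> v <= u + eps%:E /\ u - eps%:E <= v)%E.

Lemma level_close_lt C eps u v :
  0 <= eps -> (u < C%:E)%E -> (v < C%:E)%E -> level_close C eps u v.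
Proof.
move=> eps0 uC vC; split => [_|/(lt_le_trans uC)]; last by rewrite ltxx.
by apply: (le_trans (ltW vC)); rewrite lee_fin lerDl.
Qed.

Lemma level_close_fin C eps (a b : R) :
  `|a - b| <= eps -> level_close C eps a%:E b%:E.
Proof.
rewrite ler_norml => /andP[h1 h2]; split; first by rewrite lte_fin lee_fin; lra.
by move=> _; rewrite -EFinD -EFinB !lee_fin; split; lra.
Qed.

End LevelClose.

Section HalfKernel.
Variable R : realType.
Implicit Types (g : R -> \bar R) (C eps : R).

Lemma near_at_right_itv (a : R) (P : R -> Prop) :
  (\forall x \near a^'+, P x) -> exists2 d, 0 < d & forall x, a < x < a + d -> P x.
Proof.
move=> [e /= e0 aP]; exists e => // x /andP[ax xd]; apply: aP => //=.
by rewrite /ball /= ltr0_norm ?subr_lt0 // opprB ltrBlDl.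
Qed.

Lemma near_at_left_itv (a : R) (P : R -> Prop) :
  (\forall x \near a^'-, P x) -> exists2 d, 0 < d & forall x, a - d < x < a -> P x.
Proof.
move=> [e /= e0 aP]; exists e => // x /andP[ax xd]; apply: aP => //=.
by rewrite /ball /= gtr0_norm ?subr_gt0 // ltrBlDl -ltrBlDr.
Qed.

(* A singular kernel on [[0,1]], or reflected from [[-1,0]]. *)
Definition half_kernel g : Prop :=
  [/\ forall t, 0 < t < 1 -> g t \is a fin_num, concave_on g 0 1,
      g x @[x --> 0^'+] --> -oo%E, g 0 = -oo%E & g x @[x --> 1^'-] --> g 1].

Lemma half_kernel_fine_concave g : half_kernel g ->
  forall x y l, 0 < x < 1 -> 0 < y < 1 -> 0 <= l <= 1 ->
  l * fine (g x) + (1 - l) * fine (g y) <= fine (g (l * x + (1 - l) * y)).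
Proof.
move=> [fin conc _ _ _] x y l x01 y01 l01.
have m01 : 0 < l * x + (1 - l) * y < 1.
  move: x01 y01 l01 => /andP[? ?] /andP[? ?] /andP[? ?].
  by have [xy|yx] := leP x y; apply/andP; split; nra.
have := conc x y l x01 y01 l01.
by rewrite -(fineK (fin _ x01)) -(fineK (fin _ y01)) -(fineK (fin _ m01)) -!EFinM -EFinD lee_fin.
Qed.

Lemma half_kernel_ub g : half_kernel g ->
  exists D : R, forall s, 0 <= s <= 1 -> (g s <= D%:E)%E.
Proof.
move=> hg; have [fin _ _ g0 lim1] := hg.
have [D gD] := concave_ub (half_kernel_fine_concave hg) ltr01.
have fine_le x : 0 < x < 1 -> (g x <= D%:E)%E.
  by move=> x01; rewrite -(fineK (fin x x01)) lee_fin gD.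
exists D => s /andP[s0 s1].
have [<-|s_gt0] := eqVneq 0 s; first by rewrite g0 leNye.
have [->|s_lt1] := eqVneq s 1; last by apply: fine_le; rewrite !lt_neqAle s_gt0 s_lt1 s0 s1.
apply: (cvge_le _ lim1); near=> x; apply: fine_le; apply/andP; split; near: x.
- exact: nbhs_left_gt ltr01.
- exact: nbhs_left_lt.
Unshelve. all: by end_near.
Qed.

Lemma half_kernel_level_close_at1 g C eps : half_kernel g -> 0 < eps ->
  exists2 r, 0 < r & forall x y, 1 - r < x <= 1 -> 1 - r < y <= 1 ->
    level_close C eps (g x) (g y).
Proof.
move=> hg eps0; have [fin _ _ _ lim1] := hg; have [D gD] := half_kernel_ub hg.
case E1: (g 1) lim1 (gD 1 ltac:(by rewrite ler01 lexx)) => [v| |] lim1 g1D; last 2 first.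
- by move: g1D; rewrite leye_eq.
- move/cvgeNyPlt: lim1 => /(_ C) /near_at_left_itv [d d0 gC].
  have lowC x : 1 - d < x <= 1 -> (g x < C%:E)%E.
    move=> /andP[x1 x2]; have [->|x_neq1] := eqVneq x 1; first by rewrite E1 ltNyr.
    by apply: gC; rewrite x1 lt_neqAle x_neq1 x2.
  by exists d => // x y hx hy; apply: level_close_lt; [lra|exact: lowC|exact: lowC].
move/fine_cvgP: lim1 => [/near_at_left_itv [d1 d10 fin1]].
move/cvgrPdist_lt => /(_ (eps / 2) ltac:(lra)) /near_at_left_itv [d2 d20 near_v].
have d12 : 0 < minr d1 d2 by rewrite lt_min d10 d20.
exists (minr d1 d2) => //.
have close_v x : 1 - minr d1 d2 < x <= 1 -> exists2 w, g x = w%:E & `|v - w| < eps / 2.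
  move=> /andP[x1 x2]; have [->|x_neq1] := eqVneq x 1.
    by exists v; rewrite ?E1 // subrr normr0; lra.
  have m1 : minr d1 d2 <= d1 by rewrite ge_min lexx.
  have m2 : minr d1 d2 <= d2 by rewrite ge_min lexx orbT.
  have x3 : x < 1 by rewrite lt_neqAle x_neq1 x2.
  have := fin1 x ltac:(apply/andP; split; lra); have := near_v x ltac:(apply/andP; split; lra).
  by exists (fine (g x)); rewrite ?fineK.
move=> x y /close_v [wx -> hx] /close_v [wy -> hy]; apply: level_close_fin.
move: hx hy; rewrite !ltr_norml ler_norml => /andP[? ?] /andP[? ?].
by apply/andP; split; lra.
Qed.

Lemma half_kernel_lt_near0 g C : half_kernel g ->
  exists2 r, 0 < r & forall s, 0 <= s < r -> (g s < C%:E)%E.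
Proof.
move=> [_ _ lim0 g0 _]; move/cvgeNyPlt: lim0 => /(_ C) /near_at_right_itv [r r_gt0 gC].
exists r => // s /andP[s0 sr]; have [<-|s_neq0] := eqVneq 0 s; first by rewrite g0 ltNyr.
by apply: gC; rewrite add0r lt_neqAle s_neq0 s0.
Qed.

Lemma half_kernel_level_close g C eps : half_kernel g -> 0 < eps ->
  exists2 th, 0 < th & (forall s, 0 <= s <= th -> (g s < C%:E)%E) /\
    forall s s', 0 <= s <= 1 -> 0 <= s' <= 1 -> `|s - s'| <= th ->
      level_close C eps (g s) (g s').
Proof.
move=> hg eps0; have [fin _ _ _ _] := hg.
have [r0' r0'_gt0 low'] := half_kernel_lt_near0 C hg.
pose r0 := minr r0' (1/2).
have [r0_gt0 r0_le r0_le'] : [/\ 0 < r0, r0 <= 1/2 & r0 <= r0'].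
  by rewrite lt_min !ge_min r0'_gt0 !lexx orbT; split=> //; lra.
have low s : 0 <= s < r0 -> (g s < C%:E)%E.
  by move=> /andP[s0 s1]; apply: low'; apply/andP; split; lra.
have [r1' r1'_gt0 close1] := half_kernel_level_close_at1 C hg eps0.
pose r1 := minr r1' (1/2).
have [r1_gt0 r1_le r1_le'] : [/\ 0 < r1, r1 <= 1/2 & r1 <= r1'].
  by rewrite lt_min !ge_min r1'_gt0 !lexx orbT; split=> //; lra.
have [L L0 lip] := concave_lipschitz (half_kernel_fine_concave hg)
  (c := r0 / 4) (d := 1 - r1 / 4) ltac:(lra) ltac:(lra).
pose th := minr (minr (r0 / 4) (r1 / 4)) (eps / (L + 1)).
have [th_gt0 th_r0 th_r1] : [/\ 0 < th, th <= r0 / 4 & th <= r1 / 4].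
  rewrite !ge_min !lexx !orbT; split=> //.
  have e0 : 0 < eps / (L + 1) by apply: divr_gt0; lra.
  by rewrite !lt_min e0 andbT; apply/andP; split; lra.
have th_L : th * L <= eps.
  have : th <= eps / (L + 1) by rewrite !ge_min lexx !orbT.
  by rewrite ler_pdivlMr; lra.
exists th => //; split => [s /andP[s0 s1]|s s' /andP[s0 s1] /andP[s0' s1']].
  by apply: low; apply/andP; split; lra.
rewrite ler_norml => /andP[h1 h2].
have [s_lo|s_hi] := ltP s (r0 / 2).
  by apply: level_close_lt; [lra|apply: low; apply/andP; split; lra..].
have [s_top|s_mid] := ltP (1 - r1 / 2) s.
  by apply: close1; apply/andP; split; lra.
have fin_mid u : r0 / 4 <= u <= 1 - r1 / 4 -> g u = (fine (g u))%:E.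
  by move=> /andP[u1 u2]; rewrite fineK //; apply: fin; apply/andP; split; lra.
have s_mid' : r0 / 4 <= s <= 1 - r1 / 4 by apply/andP; split; lra.
have s'_mid : r0 / 4 <= s' <= 1 - r1 / 4 by apply/andP; split; lra.
rewrite (fin_mid s s_mid') (fin_mid s' s'_mid); apply: level_close_fin.
apply: (le_trans (lip s s' s_mid' s'_mid)).
apply: (le_trans _ th_L); rewrite mulrC; apply: ler_wpM2r => //.
by rewrite ler_norml; apply/andP; split; lra.
Qed.

End HalfKernel.

Section SingularKernel.
Variable R : realType.
Implicit Types (k : R -> \bar R) (C eps : R).

Lemma singular_kernel_halves k : singular_kernel k ->
  half_kernel k /\ half_kernel (fun u => k (- u)).
Proof.
move=> [[fin [cneg [cpos [l0p [l0m [lm1 l1]]]]]] k0]; split.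
  by split => //; [move=> t t01; apply: fin; right | rewrite -k0].
split.
- by move=> t /andP[t0 t1]; apply: fin; left; apply/andP; split; lra.
- move=> x y l /andP[x0 x1] /andP[y0 y1] l01.
  have := cneg (- x) (- y) l ltac:(apply/andP; split; lra) ltac:(apply/andP; split; lra) l01.
  by rewrite !mulrN -opprD.
- by have := (cvg_at_leftNP k 0 (k 0)).1 l0m; rewrite oppr0 k0.
- by rewrite oppr0.
- by have := (cvg_at_rightNP k (-1) (k (-1))).1 lm1; rewrite opprK.
Qed.

Lemma singular_kernel_ub k : singular_kernel k ->
  exists B : R, forall s, -1 <= s <= 1 -> (k s <= B%:E)%E.
Proof.
move=> /singular_kernel_halves [/half_kernel_ub [B1 kB1] /half_kernel_ub [B2 kB2]].
exists (maxr B1 B2) => s /andP[s1 s2]; have [s0|s0] := leP 0 s.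
  by apply: (le_trans (kB1 s _)); rewrite ?s0 // lee_fin le_max lexx.
have := kB2 (- s) ltac:(apply/andP; split; lra); rewrite opprK => ks.
by apply: (le_trans ks); rewrite lee_fin le_max lexx orbT.
Qed.

Lemma singular_kernel_level_close k C eps : singular_kernel k -> 0 < eps ->
  exists2 th, 0 < th & forall s s', -1 <= s <= 1 -> -1 <= s' <= 1 ->
    `|s - s'| <= th -> level_close C eps (k s) (k s').
Proof.
move=> /singular_kernel_halves [kp km] eps0.
have [t1 t1_gt0 [low1 close1]] := half_kernel_level_close C kp eps0.
have [t2 t2_gt0 [low2 close2]] := half_kernel_level_close C km eps0.
have [th1 th2] : minr t1 t2 <= t1 /\ minr t1 t2 <= t2 by rewrite !ge_min !lexx orbT.
exists (minr t1 t2) => [|s s' /andP[s1 s2] /andP[s1' s2']]; first by rewrite lt_min t1_gt0.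
move=> /[dup] ss'; rewrite ler_norml => /andP[h1 h2].
have low2' u : - t2 <= u <= 0 -> (k u < C%:E)%E.
  by move=> /andP[? ?]; have := low2 (- u) ltac:(apply/andP; split; lra); rewrite opprK.
have [s0|s0] := leP 0 s; have [s0'|s0'] := leP 0 s'.
- by apply: close1; [rewrite s0|rewrite s0'|lra].
- by apply: level_close_lt; [lra|apply: low1|apply: low2']; apply/andP; split; lra.
- by apply: level_close_lt; [lra|apply: low2'|apply: low1]; apply/andP; split; lra.
- have := close2 (- s) (- s') ltac:(apply/andP; split; lra) ltac:(apply/andP; split; lra).
  by rewrite !opprK; apply; rewrite -normrN opprD !opprK (le_trans ss').
Qed.

End SingularKernel.

Section Coordinates.
Variables (R : realType) (n : nat).
Implicit Types (x y : 'I_n -> R) (j : nat) (t : R).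

Lemma Sbar_sub_itv x t i : Sbar x -> 0 <= t <= 1 -> -1 <= t - x i <= 1.
Proof. by move=> [x01 _] /andP[t0 t1]; have /andP[? ?] := x01 i; apply/andP; split; lra. Qed.

Lemma ycoord_itv01 y k : Sbar y -> 0 <= ycoord y k <= 1.
Proof.
move=> [y01 _]; case: k => [|k] /=; first by rewrite lexx ler01.
by case: insubP => [i _ _|_] /=; [exact: y01 | rewrite ler01 lexx].
Qed.

Lemma ycoord_cases x y k :
  ycoord y k = ycoord x k \/ exists i, ycoord y k = y i /\ ycoord x k = x i.
Proof.
case: k => [|k] /=; first by left.
by case: insubP => [i _ _|_] /=; [right; exists i | left].
Qed.

Lemma Iint_itv01 y j t : Sbar y -> Iint y j t -> 0 <= t <= 1.
Proof.
move=> Sy /andP[t1 t2]; have /andP[? ?] := ycoord_itv01 j Sy.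
by have /andP[? ?] := ycoord_itv01 j.+1 Sy; apply/andP; split; lra.
Qed.

Lemma Iint_near_coord x y j t : Iint x j t -> ~ Iint y j t ->
  exists i, `|t - x i| <= `|x i - y i|.
Proof.
move=> /andP[xl xr] tNy; have [yl|ly] := leP (ycoord y j) t; last first.
  case: (ycoord_cases x y j) => [e|[i [ey ex]]]; first by move: ly; rewrite e ltNge xl.
  exists i; rewrite ex in xl; rewrite ey in ly.
  by rewrite (ger0_norm (x := t - x i)) ?(ler0_norm (x := x i - y i)); lra.
have [yr|ry] := leP t (ycoord y j.+1); first by case: tNy; rewrite /Iint /= yl yr.
case: (ycoord_cases x y j.+1) => [e|[i [ey ex]]]; first by move: ry; rewrite e ltNge xr.
exists i; rewrite ex in xr; rewrite ey in ry.
by rewrite (ler0_norm (x := t - x i)) ?(ger0_norm (x := x i - y i)); lra.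
Qed.

Lemma Iint_far_coord x y j t : Iint y j t ->
  (forall i, `|x i - y i| < `|t - y i|) -> Iint x j t.
Proof.
move=> /andP[yl yr] far; apply/andP; split.
  case: (ycoord_cases x y j) => [<-|[i [ey ->]]] //.
  rewrite ey in yl; have := far i; rewrite (ger0_norm (x := t - y i)); last lra.
  by have := ler_norm (x i - y i); lra.
case: (ycoord_cases x y j.+1) => [<-|[i [ey ->]]] //.
rewrite ey in yr; have := far i; rewrite (ler0_norm (x := t - y i)); last lra.
by have := ler_norm (- (x i - y i)); rewrite normrN; lra.
Qed.

End Coordinates.

Lemma ereal_sup_image_sub (R : realType) (T : Type) (f : T -> \bar R) (A Z : set T) :
  Z `<=` A -> (forall t, A t -> ~ Z t -> exists2 s, Z s & (f t <= f s)%E) ->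
  ereal_sup (f @` A) = ereal_sup (f @` Z).
Proof.
move=> ZA dominated; apply/eqP; rewrite eq_le; apply/andP; split; last first.
  exact/ereal_sup_le/image_subset.
apply: ge_ereal_sup => _ [t At <-]; have [Zt|NZt] := pselect (Z t).
  exact: ereal_sup_ubound (ex_intro2 _ _ t Zt erefl).
have [s Zs fts] := dominated t At NZt.
exact: le_trans fts (ereal_sup_ubound (ex_intro2 _ _ s Zs erefl)).
Qed.

Lemma exists_pos_mulrn_le (R : realFieldType) (n : nat) (r : R) :
  0 < r -> exists2 e, 0 < e & e *+ n <= r.
Proof.
move=> r0; exists (r / n.+1%:R); first by rewrite divr_gt0.
rewrite -[_ *+ n]mulr_natr -mulrA ler_piMr ?(ltW r0) // mulrC ler_pdivrMr ?ltr0n //.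
by rewrite mul1r ler_nat.
Qed.

Lemma exists_pos_lbound_ord (R : realDomainType) (n : nat) (f : 'I_n -> R) :
  (forall i, 0 < f i) -> exists2 e, 0 < e & forall i, e <= f i.
Proof.
move=> f_gt0; exists (\big[minr/1]_i f i).
  by apply: (big_ind (fun v => 0 < v)) => // a b a0 b0; rewrite lt_min a0 b0.
by move=> i; rewrite (bigD1 i) //= ge_min lexx.
Qed.

Section FieldBounds.
Variables (R : realType) (n : nat) (K : 'I_n -> R -> \bar R) (J : R -> \bar R).

Lemma Ffun_le_shift x y t e :
  (forall i, K i (t - x i) <= K i (t - y i) + e%:E)%E ->
  (Ffun J K x t <= Ffun J K y t + (e *+ n)%:E)%E.
Proof.
move=> Kxy; rewrite /Ffun -addeA leeD2l //; apply: (le_trans (lee_sum _ (fun i _ => Kxy i))).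
by rewrite big_split /= sumEFin sumr_const card_ord.
Qed.

Variables (M : R) (B : 'I_n -> R).
Hypothesis J_le : forall t, 0 <= t <= 1 -> (J t <= M%:E)%E.
Hypothesis K_le : forall i s, -1 <= s <= 1 -> (K i s <= (B i)%:E)%E.

Lemma Ffun_le x t : Sbar x -> 0 <= t <= 1 -> (Ffun J K x t <= (M + \sum_i B i)%:E)%E.
Proof.
move=> Sx t01; rewrite /Ffun EFinD leeD ?J_le // -sumEFin lee_sum // => i _.
exact/K_le/Sbar_sub_itv.
Qed.

Lemma Ffun_le_of_K x t i c : Sbar x -> 0 <= t <= 1 -> (K i (t - x i) <= c%:E)%E ->
  (Ffun J K x t <= (M + (\sum_k B k - B i) + c)%:E)%E.
Proof.
move=> Sx t01 Kc; have -> : \sum_k B k - B i = \sum_(k | k != i) B k.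
  by rewrite (bigD1 i) //= addrAC subrr add0r.
rewrite /Ffun (bigD1 i) //= !EFinD -addeA (addeC _ c%:E) leeD ?J_le // leeD //.
by rewrite -sumEFin lee_sum // => k _; apply/K_le/Sbar_sub_itv.
Qed.

Lemma mval_fin y j : Sbar y -> mval J K y j != -oo%E -> mval J K y j \is a fin_num.
Proof.
move=> Sy my; rewrite fin_numE my /= lt_eqF //; apply: le_lt_trans (ltry (M + \sum_i B i)).
by apply: ge_ereal_sup => _ [t jt <-]; apply/Ffun_le/(Iint_itv01 Sy jt).
Qed.

End FieldBounds.

Section Stability.
Variables (R : realType) (n : nat) (K : 'I_n -> R -> \bar R) (J : R -> \bar R).
Variables (M : R) (B : 'I_n -> R).
Hypothesis J_le : forall t, 0 <= t <= 1 -> (J t <= M%:E)%E.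
Hypothesis K_le : forall i s, -1 <= s <= 1 -> (K i s <= (B i)%:E)%E.
Hypothesis K0 : forall i, K i 0 = -oo%E.

Variables (y : 'I_n -> R) (j : nat) (mr q eps eta : R) (C th : 'I_n -> R).
Hypothesis Sy : Sbar y.
Hypothesis m_y : mval J K y j = mr%:E.
Hypothesis q_gt0 : 0 < q.
Hypothesis eps_ge0 : 0 <= eps.
Hypothesis eps_small : eps *+ n <= q / 8.
Hypothesis C_small : forall i, M + (\sum_k B k - B i) + (C i + eps) <= mr - q - 1.
Hypothesis K_close : forall i s s', -1 <= s <= 1 -> -1 <= s' <= 1 ->
  `|s - s'| <= th i -> level_close (C i) eps (K i s) (K i s').
Hypothesis eta_th : forall i, 2 * eta <= th i.

Definition top_set : set R :=
  [set t | Iint y j t /\ ((mr - q / 2)%:E <= Ffun J K y t)%E].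

Lemma Ffun_le_of_K_low x t i : Sbar x -> 0 <= t <= 1 ->
  (K i (t - x i) <= (C i + eps)%:E)%E -> (Ffun J K x t <= (mr - q - 1)%:E)%E.
Proof.
move=> Sx t01 Ki; apply: le_trans (Ffun_le_of_K J_le K_le Sx t01 Ki) _.
by rewrite lee_fin C_small.
Qed.

Lemma K_low_of_near x t i : Sbar x -> 0 <= t <= 1 -> `|t - x i| <= th i ->
  (K i (t - x i) <= (C i + eps)%:E)%E.
Proof.
move=> Sx t01 near_i.
have [+ _] := @K_close i 0 (t - x i) ltac:(by rewrite lerN10 ler01) (Sbar_sub_itv i Sx t01)
  ltac:(by rewrite sub0r normrN).
by rewrite K0; apply; rewrite ltNyr.
Qed.

Lemma top_set_far t : top_set t ->
  forall i, th i < `|t - y i| /\ ((C i)%:E <= K i (t - y i))%E.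
Proof.
move=> [jt Fy] i; have t01 := Iint_itv01 Sy jt.
have Fy_gt : ((mr - q - 1)%:E < Ffun J K y t)%E.
  by apply: (lt_le_trans _ Fy); rewrite lte_fin; have := q_gt0; lra.
have Ky_gt : (K i (t - y i) <= (C i + eps)%:E)%E -> False.
  by move=> /(Ffun_le_of_K_low Sy t01) /(lt_le_trans Fy_gt); rewrite ltxx.
split; [rewrite ltNge | rewrite leNgt]; apply/negP => Ki; apply: Ky_gt.
- exact: K_low_of_near.
- by apply: le_trans (ltW Ki) _; rewrite lee_fin lerDl.
Qed.

Lemma Ffun_close x t : Sbar x -> (forall i, `|x i - y i| <= th i) -> 0 <= t <= 1 ->
  (forall i, ((C i)%:E <= K i (t - y i))%E) ->
  (Ffun J K x t <= Ffun J K y t + (q / 8)%:E)%E /\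
  (Ffun J K y t <= Ffun J K x t + (q / 8)%:E)%E.
Proof.
move=> Sx xy t01 Ky.
have Kxy i : (K i (t - x i) <= K i (t - y i) + eps%:E)%E /\
             (K i (t - y i) - eps%:E <= K i (t - x i))%E.
  have [_ close] := @K_close i _ _ (Sbar_sub_itv i Sy t01) (Sbar_sub_itv i Sx t01)
    ltac:(by rewrite opprB addrC addrA subrK; apply: xy).
  exact: close (Ky i).
have shift_q8 u v : (forall i, K i (t - u i) <= K i (t - v i) + eps%:E)%E ->
    (Ffun J K u t <= Ffun J K v t + (q / 8)%:E)%E.
  move=> /(Ffun_le_shift J) uv; apply: le_trans uv _.
  by rewrite leeD2l // lee_fin.
split; apply: shift_q8 => i; first by case: (Kxy i).
by rewrite -leeBlDr //; case: (Kxy i).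
Qed.

Section Perturbed.
Variable x : 'I_n -> R.
Hypothesis Sx : Sbar x.
Hypothesis x_near : forall i, `|x i - y i| <= eta.

Lemma x_near_th i : `|x i - y i| <= th i.
Proof. by have := x_near i; have := eta_th i; have := normr_ge0 (x i - y i); lra. Qed.

Lemma top_set_sub : top_set `<=` Iint x j.
Proof.
move=> t Zt; apply: Iint_far_coord Zt.1 _ => i.
by have [far _] := top_set_far Zt i; apply: le_lt_trans (x_near_th i) far.
Qed.

Lemma top_set_dist t : top_set t -> forall i, eta <= `|t - x i|.
Proof.
move=> Zt i; have [far _] := top_set_far Zt i.
have := ler_distD (x i) t (y i); have := x_near i; have := eta_th i; lra.
Qed.

Lemma Ffun_dichotomy t : Iint x j t ->
  (Ffun J K x t <= (mr - q - 1)%:E)%E \/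
  Iint y j t /\ (Ffun J K x t <= Ffun J K y t + (q / 8)%:E)%E.
Proof.
move=> jt; have t01 := Iint_itv01 Sx jt.
have [jty|jtNy] := pselect (Iint y j t); last first.
  left; have [i ti] := Iint_near_coord jt jtNy.
  apply: (@Ffun_le_of_K_low x t i Sx t01); apply: K_low_of_near => //.
  exact: le_trans ti (x_near_th i).
have [Ky|/existsNP [i /negP]] := pselect (forall i, ((C i)%:E <= K i (t - y i))%E).
  by right; split => //; case: (Ffun_close Sx x_near_th t01 Ky).
rewrite -ltNge => Ki; left; apply: (@Ffun_le_of_K_low x t i Sx t01).
have [+ _] := @K_close i _ _ (Sbar_sub_itv i Sy t01) (Sbar_sub_itv i Sx t01)
  ltac:(by rewrite opprB addrC addrA subrK; apply: x_near_th).
exact.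
Qed.

Lemma Ffun_x_le t : Iint x j t -> (Ffun J K x t <= (mr + q / 8)%:E)%E.
Proof.
case/Ffun_dichotomy => [Fx|[jty Fx]]; apply: le_trans Fx _.
  by rewrite lee_fin; have := q_gt0; lra.
have : (Ffun J K y t <= mval J K y j)%E := ereal_sup_ubound (ex_intro2 _ _ t jty erefl).
by rewrite m_y EFinD => Fy; apply: leeD.
Qed.

Lemma Ffun_x_le_off t : Iint x j t -> ~ top_set t ->
  (Ffun J K x t <= (mr - 3 * q / 8)%:E)%E.
Proof.
move=> jt NZt; case: (Ffun_dichotomy jt) => [Fx|[jty Fx]]; apply: le_trans Fx _.
  by rewrite lee_fin; have := q_gt0; lra.
have Fy : (Ffun J K y t <= (mr - q / 2)%:E)%E.
  by rewrite leNgt; apply/negP => Fy; apply: NZt; split => //; apply: ltW.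
by apply: le_trans (leeD Fy (lexx _)) _; rewrite -EFinD lee_fin; lra.
Qed.

Lemma top_set_witness : exists2 t0, top_set t0 & ((mr - q / 4)%:E <= Ffun J K x t0)%E.
Proof.
have : ((mr - q / 8)%:E < mval J K y j)%E by rewrite m_y lte_fin; have := q_gt0; lra.
move=> /ereal_sup_gt [_ [t0 jt0 <-] Ft0].
have Zt0 : top_set t0.
  by split => //; apply: le_trans (ltW Ft0); rewrite lee_fin; have := q_gt0; lra.
exists t0 => //.
have [_ Fyx] := Ffun_close Sx x_near_th (Iint_itv01 Sy jt0) (fun i => (top_set_far Zt0 i).2).
have := lt_le_trans Ft0 Fyx; rewrite -lteBlDr // -EFinB => Fx.
by apply: le_trans (ltW Fx); rewrite lee_fin; lra.
Qed.

Lemma mval_x_eq : mval J K x j = ereal_sup (Ffun J K x @` top_set).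
Proof.
apply: ereal_sup_image_sub top_set_sub _ => t jt NZt.
have [t0 Zt0 Ft0] := top_set_witness; exists t0 => //.
apply: le_trans (Ffun_x_le_off jt NZt) (le_trans _ Ft0).
by rewrite lee_fin; have := q_gt0; lra.
Qed.

Lemma mval_x_bounds : ((mr - q / 4)%:E <= mval J K x j <= (mr + q / 8)%:E)%E.
Proof.
apply/andP; split; last by apply: ge_ereal_sup => _ [t jt <-]; apply: Ffun_x_le.
have [t0 Zt0 Ft0] := top_set_witness; apply: le_trans Ft0 _.
exact: ereal_sup_ubound (ex_intro2 _ _ t0 (top_set_sub Zt0) erefl).
Qed.

Lemma top_set_near_max t : top_set t ->
  (mval J K x j - q%:E <= Ffun J K x t)%E /\ (-oo < mval J K x j - q%:E)%E.
Proof.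
move=> Zt; have /andP[m_lo m_hi] := mval_x_bounds.
have [_ Fyx] := Ffun_close Sx x_near_th (Iint_itv01 Sy Zt.1) (fun i => (top_set_far Zt i).2).
split.
  rewrite leeBlDr //; apply: le_trans m_hi _.
  have := le_trans Zt.2 Fyx; rewrite -leeBlDr // -EFinB => Fx.
  by apply: le_trans (leeD Fx (lexx _)); rewrite -EFinD lee_fin; have := q_gt0; lra.
by apply: lt_le_trans (leeD m_lo (lexx _)); rewrite -EFinN -EFinD ltNyr.
Qed.

Lemma top_set_stable :
  [/\ top_set `<=` Iint x j /\ (forall t, top_set t -> forall i, eta <= `|t - x i|),
      mval J K x j = ereal_sup (Ffun J K x @` top_set) &
      forall t, top_set t ->
        (mval J K x j - q%:E <= Ffun J K x t)%E /\ (-oo < mval J K x j - q%:E)%E].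
Proof.
split; [split|..]; [exact: top_set_sub | exact: top_set_dist | exact: mval_x_eq |
  exact: top_set_near_max].
Qed.

End Perturbed.
End Stability.

Unset Implicit Arguments.

Theorem lemma3p4 (R : realType) (n : nat) (K : 'I_n -> R -> \bar R)
    (J : R -> \bar R) (j : 'I_n.+1) :
  (forall i : 'I_n, singular_kernel (K i)) ->
  field_function n J ->
  forall (q : R) (y : 'I_n -> R),
    0 < q -> Sbar y -> mval J K y j != -oo%E ->
    exists eta : R, exists Z : set R,
      0 < eta /\ Z `<=` Iint y j /\
      forall x : 'I_n -> R, Sbar x -> (forall i : 'I_n, `|x i - y i| <= eta) ->
        [/\ Z `<=` Iint x j /\
              (forall t, Z t -> forall i : 'I_n, eta <= `|t - x i|),
            mval J K x j = ereal_sup (Ffun J K x @` Z) &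
            forall t, Z t ->
              (mval J K x j - q%:E <= Ffun J K x t)%E /\
              (-oo < mval J K x j - q%:E)%E].
Proof.
move=> hK [[M J_le] _] q y q_gt0 Sy my.
have /choice [B K_le] i : exists b : R, forall s, -1 <= s <= 1 -> (K i s <= b%:E)%E.
  exact: singular_kernel_ub.
have K0 i : K i 0 = -oo%E by case: (hK i).
pose mr := fine (mval J K y j).
have m_y : mval J K y j = mr%:E by rewrite fineK // (mval_fin J_le K_le Sy my).
have [eps eps_gt0 eps_small] : exists2 eps : R, 0 < eps & eps *+ n <= q / 8.
  by apply: exists_pos_mulrn_le; lra.
pose C i := mr - q - 1 - eps - (M + (\sum_k B k - B i)).
have C_small i : M + (\sum_k B k - B i) + (C i + eps) <= mr - q - 1 by rewrite /C; lra.
have /choice [th K_close] i : exists th : R, 0 < th /\ forall s s', -1 <= s <= 1 ->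
    -1 <= s' <= 1 -> `|s - s'| <= th -> level_close (C i) eps (K i s) (K i s').
  by have [th th_gt0 close] := singular_kernel_level_close (C i) (hK i) eps_gt0; exists th.
have [e e_gt0 e_le] := exists_pos_lbound_ord (fun i => (K_close i).1).
exists (e / 2), (top_set K J y j mr q); split; first by lra.
split=> [t []|x Sx x_near] //.
apply: (top_set_stable J_le K_le K0 Sy m_y q_gt0 (ltW eps_gt0) eps_small C_small
  (fun i => (K_close i).2)) => // i.
by have := e_le i; lra.
Qed.
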